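(* Let $c_0\ge0$, $c_1>0$, $a\in\mathbb{R}$, $v_\circ>0$, let $v$ solve $v'=a-c_0v-c_1v^2$, $v(0)=v_\circ$, $s(t)=\int_0^tv$, and suppose one of the following holds: (c) $w$ real, $a\ge0$, $v_\circ>v_\infty$, with $(t_{\min},t_{\max})=(t_\infty,\infty)$; (d) $w$ real, $a<0$, with $(t_{\min},t_{\max})=(t_\infty,t_\circ)$; (e) $w$ complex, with $(t_{\min},t_{\max})=(t_{v_\infty},t_{v_\circ})$. Let $t_\star\in(t_{\min},t_{\max})$, $\zeta=s(t_\star)$, $f(t)=s(t)-\zeta$, and define $t_0=0$ and $$t_{k+1}=\begin{cases}t_k-\dfrac{f(t_k)}{f'(t_k)+f(t_k)/(t_k-t_{\min})},& f(t_k)>0,\\[2mm] t_k-\dfrac{f(t_k)}{f'(t_k)},& f(t_k)\le0.\end{cases}$$ Then all $t_k$ lie in $(t_{\min},t_{\max})$, $t_k\to t_\star$, and the convergence is quadratic: $\limsup_{k\to\infty}|t_{k+1}-t_\star|/|t_k-t_\star|^2<\infty$ (over $k$ with $t_k\neq t_\star$).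
   Context: Notation: $w=\sqrt{c_0^2+4ac_1}\ge 0$ when $c_0^2+4ac_1\ge0$ (''$w$ real''); when $c_0^2+4ac_1<0$ we say ''$w$ is complex'' and write $|w|=\sqrt{-(c_0^2+4ac_1)}>0$. Set $\alpha=(w+c_0)/2$, $\beta=(w-c_0)/2$, $\gamma=c_1v_\circ+\alpha$, $v_\infty=\beta/c_1$, $\mathcal{L}(x,c)=c^{-1}\log(1-cx)$ ($c\ne0$), $\mathcal{L}(x,0)=-x$, $t_\circ=\mathcal{L}\big(\frac{v_\circ}{a+v_\circ\beta},w\big)$ (zero of $v$), $t_\infty=\mathcal{L}(1/\gamma,w)$ (pole of $v$); in the complex case $\theta_0=\arctan\frac{v_\circ|w|}{v_\circ c_0+2|a|}$, $\theta_1=\arctan\frac{|w|}{2c_1v_\circ+c_0}\in(0,\pi/2]$, $t_{v_\circ}=2\theta_0/|w|$, $t_{v_\infty}=-2\theta_1/|w|$. On $(t_{\min},t_{\max})$ the solution $v$ is finite and positive. *)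

From Stdlib Require Import Reals Lra.
Open Scope R_scope.

Definition qdisc (a c0 c1 : R) : R := c0 ^ 2 + 4 * a * c1.
(* w in the real case (qdisc >= 0) *)
Definition wr (a c0 c1 : R) : R := sqrt (qdisc a c0 c1).
(* |w| in the complex case (qdisc < 0) *)
Definition wabs (a c0 c1 : R) : R := sqrt (- qdisc a c0 c1).

Definition alpha (a c0 c1 : R) : R := (wr a c0 c1 + c0) / 2.
Definition beta (a c0 c1 : R) : R := (wr a c0 c1 - c0) / 2.
Definition gamma (a c0 c1 v0 : R) : R := c1 * v0 + alpha a c0 c1.
Definition v_inf (a c0 c1 : R) : R := beta a c0 c1 / c1.

Definition Lf (x c : R) : R :=
  if Req_EM_T c 0 then - x else ln (1 - c * x) / c.

Definition t_circ (a c0 c1 v0 : R) : R :=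
  Lf (v0 / (a + v0 * beta a c0 c1)) (wr a c0 c1).
Definition t_inf (a c0 c1 v0 : R) : R :=
  Lf (1 / gamma a c0 c1 v0) (wr a c0 c1).

Definition theta0 (a c0 c1 v0 : R) : R :=
  atan (v0 * wabs a c0 c1 / (v0 * c0 + 2 * Rabs a)).
Definition theta1 (a c0 c1 v0 : R) : R :=
  atan (wabs a c0 c1 / (2 * c1 * v0 + c0)).
Definition t_vcirc (a c0 c1 v0 : R) : R := 2 * theta0 a c0 c1 v0 / wabs a c0 c1.
Definition t_vinf (a c0 c1 v0 : R) : R := - (2 * theta1 a c0 c1 v0 / wabs a c0 c1).

(* interval (tmin, tmax) with tmax = +infinity encoded by None *)
Definition in_interval (tmin : R) (tmax : option R) (t : R) : Prop :=
  tmin < t /\ match tmax with None => True | Some b => t < b end.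

Definition newton_step (s v : R -> R) (tmin zeta t : R) : R :=
  let ft := s t - zeta in
  if Rlt_dec 0 ft then t - ft / (v t + ft / (t - tmin))
  else t - ft / v t.

Fixpoint newton_seq (s v : R -> R) (tmin zeta : R) (k : nat) : R :=
  match k with
  | O => 0
  | S k' => newton_step s v tmin zeta (newton_seq s v tmin zeta k')
  end.

From Stdlib Require Import Reals Lra Psatz Lia Arith Machin Wf_nat Classical.
Open Scope R_scope.

(* Since [v] is positive and nonincreasing on the interval, [f = s - zeta] is
   increasing and concave there.  From the left a Newton step on such an [f] never
   overshoots [tstar] and contracts the error by the factor [1 - v tstar / v t];
   from the right the damping term [f / (t - tmin)] keeps the step inside
   [(tmin, t)] while still halving the error.  Hence the iterates stay in the
   interval and converge, and the mean-value form of the error together with a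
   Lipschitz bound on [v = f'] over the (compact) range of the iterates makes the
   convergence quadratic.

   The sign conditions [v > 0] and [v' <= 0] come from explicit solutions.  For
   real [w], [U = c1 v + alpha] solves the logistic equation [U' = U (w - U)],
   so [1 / U] solves a linear equation; its explicit solution is increasing,
   vanishes at [t_inf], equals [1 / alpha] at [t_circ] and stays below [1 / w].
   For complex [w], [atan ((2 c1 v + c0) / |w|) + |w| t / 2] is constant, which
   places the zero of [v] at [t_vcirc]. *)

Lemma derivable_pt_lim_eq f x l l' :
  derivable_pt_lim f x l -> l = l' -> derivable_pt_lim f x l'.
Proof. now intros H <-. Qed.

Lemma increment_le_of_deriv_le (f f' : R -> R) x y M : x <= y ->
  (forall t, x <= t <= y -> derivable_pt_lim f t (f' t)) ->
  (forall t, x <= t <= y -> f' t <= M) -> f y - f x <= M * (y - x).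
Proof.
  intros Hxy Hd HM. destruct (Req_dec x y) as [<-|Hne]; [lra|].
  destruct (MVT_cor2 f f' x y ltac:(lra) Hd) as [c [-> Hc]].
  apply Rmult_le_compat_r; [lra|]. apply HM; lra.
Qed.

Lemma increment_ge_of_deriv_ge (f f' : R -> R) x y m : x <= y ->
  (forall t, x <= t <= y -> derivable_pt_lim f t (f' t)) ->
  (forall t, x <= t <= y -> m <= f' t) -> m * (y - x) <= f y - f x.
Proof.
  intros Hxy Hd Hm. destruct (Req_dec x y) as [<-|Hne]; [lra|].
  destruct (MVT_cor2 f f' x y ltac:(lra) Hd) as [c [-> Hc]].
  apply Rmult_le_compat_r; [lra|]. apply Hm; lra.
Qed.

Lemma lt_of_deriv_pos (f f' : R -> R) x y : x < y ->
  (forall t, x <= t <= y -> derivable_pt_lim f t (f' t)) ->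
  (forall t, x <= t <= y -> 0 < f' t) -> f x < f y.
Proof.
  intros Hxy Hd Hp. destruct (MVT_cor2 f f' x y Hxy Hd) as [c [E Hc]].
  assert (0 < f' c * (y - x)) by (apply Rmult_lt_0_compat; [apply Hp|]; lra).
  lra.
Qed.

Lemma in_interval_between tmin tmax x y t :
  in_interval tmin tmax x -> in_interval tmin tmax y -> x <= t <= y ->
  in_interval tmin tmax t.
Proof. unfold in_interval; destruct tmax; intuition lra. Qed.

Lemma in_interval_below tmin tmax x y :
  tmin < x -> x <= y -> in_interval tmin tmax y -> in_interval tmin tmax x.
Proof. unfold in_interval; destruct tmax; intuition lra. Qed.

Lemma in_interval_const_of_deriv_zero (f : R -> R) tmin tmax x y :
  (forall t, in_interval tmin tmax t -> derivable_pt_lim f t 0) ->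
  in_interval tmin tmax x -> in_interval tmin tmax y -> f x = f y.
Proof.
  intros Hd Hx Hy.
  assert (Hseg : forall p q, in_interval tmin tmax p -> in_interval tmin tmax q ->
            p <= q -> f q - f p = 0).
  { intros p q Hp Hq Hpq.
    assert (Hd' : forall t, p <= t <= q -> derivable_pt_lim f t ((fun _ => 0) t))
      by (intros; apply Hd, (in_interval_between _ _ p q); auto).
    pose proof (increment_le_of_deriv_le f _ p q 0 Hpq Hd' ltac:(intros; lra)).
    pose proof (increment_ge_of_deriv_ge f _ p q 0 Hpq Hd' ltac:(intros; lra)).
    lra. }
  destruct (Rle_dec x y); [specialize (Hseg x y) | specialize (Hseg y x)]; intuition lra.
Qed.

(* [Q ^ 2 * exp (- 2 K t)] is nonincreasing for [K = max p] and nondecreasing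
   for [K = min p]. *)
Lemma linear_ode_zero_iff (Q p : R -> R) t1 t2 : t1 <= t2 ->
  (forall t, t1 <= t <= t2 -> derivable_pt_lim Q t (p t * Q t)) ->
  (forall t, t1 <= t <= t2 -> continuity_pt p t) ->
  Q t1 = 0 <-> Q t2 = 0.
Proof.
  intros H12 HQ Hp.
  set (E K t := Q t * Q t * exp (- (2 * K) * t)).
  assert (HE : forall K t, t1 <= t <= t2 ->
            derivable_pt_lim (E K) t (2 * (p t - K) * E K t)).
  { intros K t Ht. eapply derivable_pt_lim_eq.
    - apply derivable_pt_lim_mult; [apply derivable_pt_lim_mult; apply HQ, Ht|].
      apply (derivable_pt_lim_comp (fun y => - (2 * K) * y) exp).
      + apply derivable_pt_lim_scal, derivable_pt_lim_id.
      + apply derivable_pt_lim_exp.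
    - unfold E; simpl; ring. }
  assert (Enonneg : forall K t, 0 <= E K t)
    by (intros; apply Rmult_le_pos; [nra| left; apply exp_pos]).
  assert (Ezero : forall K t, E K t <= 0 -> Q t = 0).
  { intros K t HEt. pose proof (exp_pos (- (2 * K) * t)).
    assert (Q t * Q t <= 0) by (unfold E in HEt; nra). nra. }
  split; intros HQ0.
  - destruct (continuity_ab_maj p t1 t2 H12 Hp) as [M [HM _]].
    assert (Hdec : E (p M) t2 - E (p M) t1 <= 0 * (t2 - t1)).
    { apply (increment_le_of_deriv_le _ _ t1 t2 0 H12 (HE (p M))). intros t Ht.
      pose proof (HM t Ht). pose proof (Enonneg (p M) t). nra. }
    apply (Ezero (p M)). unfold E at 2 in Hdec. rewrite HQ0 in Hdec. lra.
  - destruct (continuity_ab_min p t1 t2 H12 Hp) as [M [HM _]].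
    assert (Hinc : 0 * (t2 - t1) <= E (p M) t2 - E (p M) t1).
    { apply (increment_ge_of_deriv_ge _ _ t1 t2 0 H12 (HE (p M))). intros t Ht.
      pose proof (HM t Ht). pose proof (Enonneg (p M) t). nra. }
    apply (Ezero (p M)). unfold E at 1 in Hinc. rewrite HQ0 in Hinc. lra.
Qed.

Lemma Un_cv_of_contraction (x : nat -> R) L j rho : 0 <= rho < 1 ->
  (forall k, (j <= k)%nat -> Rabs (x (S k) - L) <= rho * Rabs (x k - L)) ->
  Un_cv x L.
Proof.
  intros Hrho Hc.
  assert (Hgeom : forall n, Rabs (x (n + j)%nat - L) <= rho ^ n * Rabs (x j - L)).
  { induction n as [|n IH]; simpl; [lra|].
    eapply Rle_trans; [apply Hc; lia|].
    rewrite Rmult_assoc. apply Rmult_le_compat_l; lra. }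
  intros eps Heps. set (B := Rabs (x j - L) + 1).
  assert (HB : 0 < B) by (pose proof (Rabs_pos (x j - L)); unfold B; lra).
  destruct (pow_lt_1_zero rho ltac:(rewrite Rabs_pos_eq; lra) (eps / B)
              ltac:(apply Rdiv_lt_0_compat; lra)) as [N HN].
  exists (N + j)%nat. intros n Hn. unfold R_dist.
  replace n with ((n - j) + j)%nat by lia.
  specialize (HN (n - j)%nat ltac:(lia)).
  rewrite Rabs_pos_eq in HN by (apply pow_le; lra).
  assert (rho ^ (n - j) * B < eps).
  { apply (Rmult_lt_reg_r (/ B)); [apply Rinv_0_lt_compat; lra|].
    rewrite Rmult_assoc, Rinv_r by lra. lra. }
  pose proof (Hgeom (n - j)%nat). pose proof (pow_le rho (n - j) (proj1 Hrho)).
  unfold B in *. nra.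
Qed.

(** * The damped Newton iteration for an increasing concave function *)

Lemma abs_quotient_le d e D K m : 0 <= d -> 0 < m <= D -> Rabs e <= K * d ->
  Rabs (d * e / D) <= K / m * d ^ 2.
Proof.
  intros Hd HD He.
  assert (HKd : 0 <= K * d) by (pose proof (Rabs_pos e); lra).
  unfold Rdiv. rewrite !Rabs_mult, Rabs_inv, (Rabs_pos_eq d), (Rabs_pos_eq D) by lra.
  apply Rle_trans with (d * (K * d) * / D).
  - apply Rmult_le_compat_r; [left; apply Rinv_0_lt_compat; lra|].
    apply Rmult_le_compat_l; lra.
  - replace (K * / m * d ^ 2) with (d * (K * d) * / m) by (field; lra).
    apply Rmult_le_compat_l; [apply Rmult_le_pos; lra|].
    apply Rinv_le_contravar; lra.
Qed.

Lemma damped_step_bounds d p q T : 0 < d < T -> 0 < p <= q ->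
  0 < q * d / (p + q * d / T) < T /\ d / 2 <= q * d / (p + q * d / T).
Proof.
  intros Hd Hpq.
  assert (Hy : q * d / T * T = q * d) by (field; lra).
  assert (Hy0 : 0 < q * d / T) by (apply Rdiv_lt_0_compat; nra).
  revert Hy Hy0. generalize (q * d / T). intros y Hy Hy0.
  assert (Hx : q * d / (p + y) * (p + y) = q * d) by (field; lra).
  assert (Hx0 : 0 < q * d / (p + y)) by (apply Rdiv_lt_0_compat; nra).
  revert Hx Hx0. generalize (q * d / (p + y)). intros X Hx Hx0.
  assert (y < q) by nra.
  split; [split|]; nra.
Qed.

Section ModifiedNewton.

Variables (tmin : R) (tmax : option R) (s v : R -> R) (tstar : R).

Local Notation I := (in_interval tmin tmax).
Local Notation N := (newton_step s v tmin (s tstar)).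
Local Notation tk := (newton_seq s v tmin (s tstar)).

Hypothesis s_derive : forall t, I t -> derivable_pt_lim s t (v t).
Hypothesis v_pos : forall t, I t -> 0 < v t.
Hypothesis v_noninc : forall x y, I x -> I y -> x <= y -> v y <= v x.
Hypothesis v_lipschitz : forall lo hi, I lo -> I hi ->
  exists G, forall x y, lo <= x -> x <= y -> y <= hi -> v x - v y <= G * (y - x).
Hypothesis tstar_in : I tstar.
Hypothesis zero_in : I 0.

Lemma s_increment_mvt x y : I x -> I y -> x < y ->
  exists xi, s y - s x = v xi * (y - x) /\ x < xi < y.
Proof.
  intros Hx Hy Hxy. apply MVT_cor2; auto.
  intros t Ht. apply s_derive, (in_interval_between _ _ x y); auto.
Qed.

Lemma newton_step_left t : I t -> t <= tstar ->
  exists xi, t <= xi <= tstar /\ N t = t + v xi / v t * (tstar - t).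
Proof.
  intros Ht Hle. pose proof (v_pos t Ht). unfold newton_step.
  destruct (Req_dec t tstar) as [<-|Hne].
  - exists t. split; [lra|]. rewrite Rminus_diag.
    destruct (Rlt_dec 0 0); [lra|]. field; lra.
  - destruct (s_increment_mvt t tstar) as [xi [E Hxi]]; auto; [lra|].
    assert (Ixi : I xi) by (apply (in_interval_between _ _ t tstar); auto; lra).
    pose proof (v_pos xi Ixi).
    exists xi. split; [lra|].
    replace (s t - s tstar) with (- (v xi * (tstar - t))) by lra.
    destruct (Rlt_dec 0 (- (v xi * (tstar - t)))); [nra|]. field; lra.
Qed.

Lemma newton_step_right t : I t -> tstar < t ->
  exists xi, tstar < xi < t /\
    N t = t - v xi * (t - tstar) / (v t + v xi * (t - tstar) / (t - tmin)).
Proof.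
  intros Ht Hlt. unfold newton_step.
  destruct (s_increment_mvt tstar t) as [xi [E Hxi]]; auto.
  assert (Ixi : I xi) by (apply (in_interval_between _ _ tstar t); auto; lra).
  pose proof (v_pos xi Ixi). exists xi. split; [lra|]. rewrite E.
  destruct (Rlt_dec 0 (v xi * (t - tstar))); [reflexivity| nra].
Qed.

Lemma newton_step_left_bounds t : I t -> t <= tstar ->
  t <= N t <= tstar /\ tstar - N t <= (1 - v tstar / v t) * (tstar - t).
Proof.
  intros Ht Hle. destruct (newton_step_left t Ht Hle) as [xi [Hxi ->]].
  assert (Ixi : I xi) by (apply (in_interval_between _ _ t tstar); auto).
  pose proof (v_pos t Ht). pose proof (v_pos tstar tstar_in).
  pose proof (v_noninc t xi Ht Ixi (proj1 Hxi)).
  pose proof (v_noninc xi tstar Ixi tstar_in (proj2 Hxi)).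
  assert (0 <= v tstar / v t <= v xi / v t /\ v xi / v t <= 1).
  { unfold Rdiv. split; [split|].
    - apply Rmult_le_pos; [|left; apply Rinv_0_lt_compat]; lra.
    - apply Rmult_le_compat_r; [left; apply Rinv_0_lt_compat|]; lra.
    - apply (Rmult_le_reg_r (v t)); auto. rewrite Rmult_assoc, Rinv_l; lra. }
  split; [split|]; nra.
Qed.

Lemma newton_step_right_bounds t : I t -> tstar < t ->
  tmin < N t < t /\ N t - tstar <= (t - tstar) / 2.
Proof.
  intros Ht Hlt. destruct (newton_step_right t Ht Hlt) as [xi [Hxi ->]].
  assert (Ixi : I xi) by (apply (in_interval_between _ _ tstar t); auto; lra).
  pose proof (v_noninc xi t Ixi Ht (Rlt_le _ _ (proj2 Hxi))).
  destruct (damped_step_bounds (t - tstar) (v t) (v xi) (t - tmin)) as [[? ?] ?].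
  - destruct tstar_in. lra.
  - pose proof (v_pos t Ht). lra.
  - split; [split|]; lra.
Qed.

Lemma newton_step_in t : I t -> I (N t).
Proof.
  intros Ht. destruct (Rle_dec t tstar) as [Hle|Hgt].
  - apply (in_interval_between _ _ t tstar); auto. apply newton_step_left_bounds; auto.
  - destruct (newton_step_right_bounds t Ht ltac:(lra)) as [[? ?] _].
    apply (in_interval_below _ _ _ t); auto; lra.
Qed.

Lemma newton_seq_in k : I (tk k).
Proof. induction k; [exact zero_in| apply newton_step_in, IHk]. Qed.

Lemma newton_seq_le k : tk k <= Rmax 0 tstar.
Proof.
  induction k as [|k IH]; [apply Rmax_l|]. simpl.
  pose proof (newton_seq_in k). pose proof (Rmax_r 0 tstar).
  destruct (Rle_dec (tk k) tstar).
  - destruct (newton_step_left_bounds (tk k)); auto. lra.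
  - destruct (newton_step_right_bounds (tk k)); auto; lra.
Qed.

Lemma newton_seq_stays_left j : tk j <= tstar ->
  forall n, tk j <= tk (n + j) <= tstar.
Proof.
  intros Hj n. induction n as [|n IH]; simpl; [lra|].
  destruct (newton_step_left_bounds (tk (n + j))); auto using newton_seq_in; lra.
Qed.

Lemma newton_seq_lower_bound : exists lo, I lo /\ lo <= tstar /\ forall k, lo <= tk k.
Proof.
  destruct (classic (exists j, tk j <= tstar)) as [Hex|Hnone].
  - (* The first iterate left of [tstar] bounds the earlier iterates, which lie right of
       [tstar], and the later ones, which increase. *)
    destruct (dec_inh_nat_subset_has_unique_least_element (fun j => tk j <= tstar))
      as [j [[Hj Hleast] _]]; auto.
    { intros n. destruct (Rle_dec (tk n) tstar); auto. }
    exists (tk j). split; [apply newton_seq_in|]. split; [auto|]. intros k.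
    destruct (le_lt_dec j k) as [Hjk|Hkj].
    + replace k with ((k - j) + j)%nat by lia. apply newton_seq_stays_left; auto.
    + destruct (Rle_dec (tk k) tstar) as [Hk|]; [|lra].
      pose proof (Hleast k Hk). lia.
  - exists tstar. split; [auto| split; [lra|]]. intros k.
    destruct (Rle_dec (tk k) tstar); [exfalso; eauto| lra].
Qed.

Lemma newton_seq_cv : Un_cv tk tstar.
Proof.
  destruct (classic (exists j, tk j <= tstar)) as [[j Hj]|Hnone].
  - pose proof (v_pos _ (newton_seq_in j)). pose proof (v_pos _ tstar_in).
    pose proof (v_noninc _ _ (newton_seq_in j) tstar_in Hj).
    assert (Hratio : 0 < v tstar / v (tk j) <= 1).
    { split; [apply Rdiv_lt_0_compat; auto|].
      apply (Rmult_le_reg_r (v (tk j))); auto. unfold Rdiv. rewrite Rmult_assoc, Rinv_l; lra. }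
    apply (Un_cv_of_contraction _ _ j (1 - v tstar / v (tk j))); [lra|].
    intros k Hk. replace k with ((k - j) + j)%nat in * by lia.
    destruct (newton_seq_stays_left j Hj (k - j)) as [Hjk Hks].
    set (t := tk (k - j + j)) in *. simpl. fold t.
    assert (It : I t) by apply newton_seq_in.
    destruct (newton_step_left_bounds t It Hks) as [Hb Hc].
    pose proof (v_pos t It). pose proof (v_noninc _ _ (newton_seq_in j) It Hjk).
    assert (v tstar / v (tk j) <= v tstar / v t).
    { unfold Rdiv. apply Rmult_le_compat_l; [lra|]. apply Rinv_le_contravar; lra. }
    rewrite !Rabs_left1 by lra. nra.
  - assert (Hright : forall k, tstar < tk k)
      by (intros k; destruct (Rle_dec (tk k) tstar); [exfalso; eauto| lra]).
    apply (Un_cv_of_contraction _ _ 0 (/ 2)); [lra|]. intros k _.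
    destruct (newton_step_right_bounds (tk k)); auto using newton_seq_in.
    pose proof (Hright k). pose proof (Hright (S k)). simpl in *.
    rewrite !Rabs_pos_eq by lra. lra.
Qed.

Lemma newton_step_error lo hi : I lo -> I hi -> lo <= tstar <= hi ->
  exists C, forall t, lo <= t <= hi -> Rabs (N t - tstar) <= C * (t - tstar) ^ 2.
Proof.
  intros Ilo Ihi Hlh. destruct (v_lipschitz lo hi Ilo Ihi) as [G HG].
  assert (Hlip : forall x y, lo <= x -> x <= y -> y <= hi -> v x - v y <= Rabs G * (y - x)).
  { intros x y Hx Hxy Hy. pose proof (HG x y Hx Hxy Hy). pose proof (Rle_abs G). nra. }
  assert (HT : 0 < tstar - tmin) by (destruct tstar_in; lra).
  assert (Hin : forall x, lo <= x <= hi -> I x)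
    by (intros; apply (in_interval_between _ _ lo hi); auto).
  assert (Hbd : forall x, lo <= x <= hi -> v hi <= v x <= v lo)
    by (intros x Hx; split; apply v_noninc; auto; lra).
  pose proof (v_pos hi Ihi). pose proof (v_pos lo Ilo).
  assert (HVT : 0 <= v lo / (tstar - tmin))
    by (apply Rmult_le_pos; [|left; apply Rinv_0_lt_compat]; lra).
  exists ((Rabs G + v lo / (tstar - tmin)) / v hi). intros t Ht.
  destruct (Rle_dec t tstar) as [Hle|Hgt].
  - destruct (newton_step_left t (Hin t Ht) Hle) as [xi [Hxi ->]].
    replace (t + v xi / v t * (tstar - t) - tstar) with ((tstar - t) * (v xi - v t) / v t)
      by (field; pose proof (v_pos t (Hin t Ht)); lra).
    replace ((t - tstar) ^ 2) with ((tstar - t) ^ 2) by ring.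
    eapply Rle_trans; [apply (abs_quotient_le _ _ _ (Rabs G) (v hi)); [lra| |]|].
    + pose proof (Hbd t Ht); lra.
    + pose proof (Hlip t xi ltac:(lra) ltac:(lra) ltac:(lra)).
      pose proof (v_noninc t xi (Hin t Ht) (Hin xi ltac:(lra)) ltac:(lra)).
      rewrite Rabs_minus_sym, Rabs_pos_eq by lra. pose proof (Rabs_pos G). nra.
    + apply Rmult_le_compat_r; [apply pow2_ge_0|]. unfold Rdiv.
      apply Rmult_le_compat_r; [left; apply Rinv_0_lt_compat|]; lra.
  - destruct (newton_step_right t (Hin t Ht) ltac:(lra)) as [xi [Hxi ->]].
    set (y := v xi * (t - tstar) / (t - tmin)).
    pose proof (Hbd xi ltac:(lra)). pose proof (Hbd t Ht).
    assert (Hy : 0 <= y <= v lo / (tstar - tmin) * (t - tstar)).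
    { unfold y, Rdiv. split; [apply Rmult_le_pos; [nra| left; apply Rinv_0_lt_compat; lra]|].
      replace (v lo * / (tstar - tmin) * (t - tstar))
        with (v lo * (t - tstar) * / (tstar - tmin)) by (field; lra).
      apply Rmult_le_compat; [nra| left; apply Rinv_0_lt_compat; lra| nra|].
      apply Rinv_le_contravar; lra. }
    replace (t - v xi * (t - tstar) / (v t + y) - tstar)
      with ((t - tstar) * (v t + y - v xi) / (v t + y)) by (field; lra).
    apply abs_quotient_le; [lra| lra|].
    pose proof (Hlip xi t ltac:(lra) ltac:(lra) ltac:(lra)).
    pose proof (v_noninc xi t (Hin xi ltac:(lra)) (Hin t Ht) ltac:(lra)).
    pose proof (Rabs_pos G).
    apply Rabs_le. split; nra.
Qed.

Theorem newton_seq_convergence :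
  (forall k, I (tk k)) /\ Un_cv tk tstar /\
  (exists C M, forall k, (M <= k)%nat -> tk k <> tstar ->
     Rabs (tk (S k) - tstar) / (Rabs (tk k - tstar)) ^ 2 <= C).
Proof.
  split; [exact newton_seq_in| split; [exact newton_seq_cv|]].
  destruct newton_seq_lower_bound as [lo [Ilo [Hlo Hk]]].
  assert (Ihi : I (Rmax 0 tstar)) by (unfold Rmax; destruct Rle_dec; auto).
  destruct (newton_step_error lo (Rmax 0 tstar)) as [C HC]; auto.
  { pose proof (Rmax_r 0 tstar); lra. }
  exists C, O. intros k _ Hne.
  assert (Hpos : 0 < Rabs (tk k - tstar) ^ 2) by (apply pow_lt, Rabs_pos_lt; lra).
  unfold Rdiv. apply (Rmult_le_reg_r (Rabs (tk k - tstar) ^ 2)); auto.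
  rewrite Rmult_assoc, Rinv_l, Rmult_1_r, pow2_abs by lra.
  apply HC. split; [apply Hk| apply newton_seq_le].
Qed.

End ModifiedNewton.

(** * The Riccati equation *)

Lemma riccati_nonincreasing c0 c1 a tmin tmax (v : R -> R) x y :
  (forall t, in_interval tmin tmax t ->
     derivable_pt_lim v t (a - c0 * v t - c1 * v t ^ 2)) ->
  (forall t, in_interval tmin tmax t -> a - c0 * v t - c1 * v t ^ 2 <= 0) ->
  in_interval tmin tmax x -> in_interval tmin tmax y -> x <= y -> v y <= v x.
Proof.
  intros Hode Hneg Hx Hy Hxy.
  assert (Hseg : forall t, x <= t <= y -> in_interval tmin tmax t)
    by (intros; apply (in_interval_between _ _ x y); auto).
  pose proof (increment_le_of_deriv_le v (fun t => a - c0 * v t - c1 * v t ^ 2) x y 0 Hxy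
                (fun t Ht => Hode t (Hseg t Ht)) (fun t Ht => Hneg t (Hseg t Ht))).
  lra.
Qed.

Lemma riccati_lipschitz c0 c1 a tmin tmax (v : R -> R) lo hi :
  0 <= c0 -> 0 < c1 ->
  (forall t, in_interval tmin tmax t ->
     derivable_pt_lim v t (a - c0 * v t - c1 * v t ^ 2)) ->
  (forall t, in_interval tmin tmax t -> 0 < v t) ->
  (forall t, in_interval tmin tmax t -> a - c0 * v t - c1 * v t ^ 2 <= 0) ->
  in_interval tmin tmax lo -> in_interval tmin tmax hi ->
  exists G, forall x y, lo <= x -> x <= y -> y <= hi -> v x - v y <= G * (y - x).
Proof.
  intros Hc0 Hc1 Hode Hpos Hneg Hlo Hhi.
  exists (c1 * v lo ^ 2 + c0 * v lo - a). intros x y Hx Hxy Hy.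
  assert (Hseg : forall t, x <= t <= y -> in_interval tmin tmax t)
    by (intros; apply (in_interval_between _ _ lo hi); auto; lra).
  enough (- (c1 * v lo ^ 2 + c0 * v lo - a) * (y - x) <= v y - v x) by lra.
  apply (increment_ge_of_deriv_ge v (fun t => a - c0 * v t - c1 * v t ^ 2) x y _ Hxy
           (fun t Ht => Hode t (Hseg t Ht))).
  intros t Ht. pose proof (Hpos t (Hseg t Ht)).
  pose proof (riccati_nonincreasing c0 c1 a tmin tmax v lo t Hode Hneg Hlo (Hseg t Ht)
                ltac:(lra)).
  assert (0 <= c1 * (v lo - v t) * (v lo + v t))
    by (apply Rmult_le_pos; [apply Rmult_le_pos|]; lra).
  assert (0 <= c0 * (v lo - v t)) by (apply Rmult_le_pos; lra).
  simpl. nra.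
Qed.

(** * Real discriminant *)

(* [int_0^t exp (- w r) dr], including the case [w = 0]. *)
Definition decay_integral (w t : R) : R :=
  if Req_EM_T w 0 then t else (1 - exp (- w * t)) / w.

(* [1 / U] for the solution [U] of the logistic equation [U' = U (w - U)],
   [U 0 = g]; it solves the linear equation [Z' = 1 - w Z]. *)
Definition logistic_recip (w g t : R) : R := exp (- w * t) / g + decay_integral w t.

Lemma decay_integral_derive w t : derivable_pt_lim (decay_integral w) t (exp (- w * t)).
Proof.
  unfold decay_integral. destruct (Req_EM_T w 0) as [->|Hw].
  - eapply derivable_pt_lim_eq; [apply derivable_pt_lim_id|].
    rewrite Ropp_0, Rmult_0_l, exp_0. reflexivity.
  - eapply derivable_pt_lim_eq.
    + apply derivable_pt_lim_div_scal, derivable_pt_lim_minus; [apply derivable_pt_lim_const|].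
      apply (derivable_pt_lim_comp (fun y => - w * y) exp).
      * apply derivable_pt_lim_scal, derivable_pt_lim_id.
      * apply derivable_pt_lim_exp.
    + field. auto.
Qed.

Lemma decay_integral_0 w : decay_integral w 0 = 0.
Proof.
  unfold decay_integral. destruct Req_EM_T; [reflexivity|].
  rewrite Rmult_0_r, exp_0. field; auto.
Qed.

Lemma w_mul_decay_integral w t : w * decay_integral w t = 1 - exp (- w * t).
Proof.
  unfold decay_integral. destruct (Req_EM_T w 0) as [->|Hw].
  - rewrite Ropp_0, Rmult_0_l, exp_0. ring.
  - field. auto.
Qed.

Lemma logistic_recip_0 w g : g <> 0 -> logistic_recip w g 0 = / g.
Proof.
  intros Hg. unfold logistic_recip. rewrite decay_integral_0, Rmult_0_r, exp_0. field; auto.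
Qed.

Lemma logistic_recip_derive w g t : g <> 0 ->
  derivable_pt_lim (logistic_recip w g) t (1 - w * logistic_recip w g t).
Proof.
  intros Hg. eapply derivable_pt_lim_eq.
  - apply derivable_pt_lim_plus; [|apply decay_integral_derive].
    apply derivable_pt_lim_div_scal.
    apply (derivable_pt_lim_comp (fun y => - w * y) exp).
    + apply derivable_pt_lim_scal, derivable_pt_lim_id.
    + apply derivable_pt_lim_exp.
  - unfold logistic_recip. rewrite Rmult_plus_distr_l, w_mul_decay_integral. field; auto.
Qed.

Lemma w_mul_logistic_recip_lt_1 w g t : 0 < g -> w < g -> w * logistic_recip w g t < 1.
Proof.
  intros Hg Hwg. unfold logistic_recip. rewrite Rmult_plus_distr_l, w_mul_decay_integral.
  pose proof (exp_pos (- w * t)).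
  assert (0 < exp (- w * t) * (1 - w / g)).
  { apply Rmult_lt_0_compat; auto.
    enough (w / g < 1) by lra.
    apply (Rmult_lt_reg_r g); auto. unfold Rdiv. rewrite Rmult_assoc, Rinv_l; lra. }
  replace (w * (exp (- w * t) / g) + (1 - exp (- w * t)))
    with (1 - exp (- w * t) * (1 - w / g)) by (field; lra).
  lra.
Qed.

Lemma logistic_recip_lt_iff w g x y : 0 < g -> w < g ->
  x < y <-> logistic_recip w g x < logistic_recip w g y.
Proof.
  intros Hg Hwg.
  assert (Hinc : forall p q, p < q -> logistic_recip w g p < logistic_recip w g q).
  { intros p q Hpq. apply (lt_of_deriv_pos _ (fun t => 1 - w * logistic_recip w g t) p q Hpq).
    - intros; apply logistic_recip_derive; lra.
    - intros t _. pose proof (w_mul_logistic_recip_lt_1 w g t Hg Hwg). lra. }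
  split; [apply Hinc|]. intros Hxy.
  destruct (Rtotal_order x y) as [|[->|Hyx]]; [auto| lra|].
  pose proof (Hinc y x Hyx). lra.
Qed.

Lemma logistic_recip_Lf w g x : g <> 0 -> w * x < 1 ->
  logistic_recip w g (Lf x w) = (/ g - x) / (1 - w * x).
Proof.
  intros Hg Hwx. unfold logistic_recip, decay_integral, Lf.
  destruct (Req_EM_T w 0) as [->|Hw].
  - rewrite Ropp_0, Rmult_0_l, exp_0. field. auto.
  - replace (- w * (ln (1 - w * x) / w)) with (- ln (1 - w * x)) by (field; auto).
    rewrite exp_Ropp, exp_ln by lra. field. repeat split; auto; lra.
Qed.

Lemma logistic_mul_recip (U : R -> R) w g tmin tmax : g <> 0 ->
  in_interval tmin tmax 0 -> U 0 = g ->
  (forall t, in_interval tmin tmax t -> derivable_pt_lim U t (U t * (w - U t))) ->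
  forall t, in_interval tmin tmax t -> U t * logistic_recip w g t = 1.
Proof.
  intros Hg H0 HU0 HU t Ht.
  set (Q y := 1 - U y * logistic_recip w g y).
  assert (HQ : forall y, in_interval tmin tmax y -> derivable_pt_lim Q y (- U y * Q y)).
  { intros y Hy. eapply derivable_pt_lim_eq.
    - apply derivable_pt_lim_minus; [apply derivable_pt_lim_const|].
      apply derivable_pt_lim_mult; [apply HU, Hy| apply logistic_recip_derive, Hg].
    - unfold Q. ring. }
  assert (Hcont : forall y, in_interval tmin tmax y -> continuity_pt (fun z => - U z) y).
  { intros y Hy. apply continuity_pt_opp.
    exact (derivable_continuous_pt U y (exist _ _ (HU y Hy))). }
  assert (HQ0 : Q 0 = 0) by (unfold Q; rewrite HU0, logistic_recip_0 by auto; field; auto).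
  enough (Q t = 0) by (unfold Q in *; lra).
  assert (Hseg : forall x y z, in_interval tmin tmax x -> in_interval tmin tmax y ->
            x <= z <= y -> in_interval tmin tmax z) by eauto using in_interval_between.
  destruct (Rle_dec 0 t).
  - apply (linear_ode_zero_iff Q (fun z => - U z) 0 t); eauto.
  - apply (linear_ode_zero_iff Q (fun z => - U z) t 0); eauto; lra.
Qed.

Lemma wr_sqr a c0 c1 : 0 <= qdisc a c0 c1 -> wr a c0 c1 * wr a c0 c1 = c0 ^ 2 + 4 * a * c1.
Proof. intros Hq. apply sqrt_sqrt, Hq. Qed.

Lemma wr_nonneg a c0 c1 : 0 <= wr a c0 c1.
Proof. apply sqrt_pos. Qed.

Lemma alpha_beta_relations a c0 c1 : 0 <= qdisc a c0 c1 ->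
  alpha a c0 c1 + beta a c0 c1 = wr a c0 c1 /\ alpha a c0 c1 - beta a c0 c1 = c0 /\
  alpha a c0 c1 * beta a c0 c1 = a * c1.
Proof.
  intros Hq. pose proof (wr_sqr a c0 c1 Hq). unfold alpha, beta.
  split; [|split]; [field| field| lra].
Qed.

Lemma riccati_logistic a c0 c1 x : 0 <= qdisc a c0 c1 ->
  c1 * (a - c0 * x - c1 * x ^ 2) =
  (c1 * x + alpha a c0 c1) * (wr a c0 c1 - (c1 * x + alpha a c0 c1)).
Proof. intros Hq. pose proof (wr_sqr a c0 c1 Hq). unfold alpha. lra. Qed.

Lemma gamma_minus_wr a c0 c1 v0 : c1 <> 0 ->
  gamma a c0 c1 v0 - wr a c0 c1 = c1 * (v0 - v_inf a c0 c1).
Proof. intros Hc1. unfold gamma, alpha, v_inf, beta. field. auto. Qed.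

Lemma wr_lt_gamma a c0 c1 v0 : 0 < c1 -> v_inf a c0 c1 < v0 -> wr a c0 c1 < gamma a c0 c1 v0.
Proof. intros Hc1 Hv0. pose proof (gamma_minus_wr a c0 c1 v0 ltac:(lra)). nra. Qed.

Lemma gamma_pos a c0 c1 v0 : 0 < c1 -> v_inf a c0 c1 < v0 -> 0 < gamma a c0 c1 v0.
Proof.
  intros Hc1 Hv0. pose proof (wr_lt_gamma a c0 c1 v0 Hc1 Hv0).
  pose proof (wr_nonneg a c0 c1). lra.
Qed.

Lemma logistic_recip_t_inf a c0 c1 v0 : 0 < c1 -> v_inf a c0 c1 < v0 ->
  logistic_recip (wr a c0 c1) (gamma a c0 c1 v0) (t_inf a c0 c1 v0) = 0.
Proof.
  intros Hc1 Hv0.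
  pose proof (wr_lt_gamma a c0 c1 v0 Hc1 Hv0). pose proof (gamma_pos a c0 c1 v0 Hc1 Hv0).
  assert (Hx : wr a c0 c1 * (1 / gamma a c0 c1 v0) < 1).
  { apply (Rmult_lt_reg_r (gamma a c0 c1 v0)); auto.
    replace (wr a c0 c1 * (1 / gamma a c0 c1 v0) * gamma a c0 c1 v0) with (wr a c0 c1)
      by (field; lra). lra. }
  unfold t_inf. rewrite logistic_recip_Lf by lra. field. lra.
Qed.

Lemma t_inf_neg a c0 c1 v0 : 0 < c1 -> v_inf a c0 c1 < v0 -> t_inf a c0 c1 v0 < 0.
Proof.
  intros Hc1 Hv0. pose proof (wr_lt_gamma a c0 c1 v0 Hc1 Hv0).
  pose proof (gamma_pos a c0 c1 v0 Hc1 Hv0).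
  apply (logistic_recip_lt_iff (wr a c0 c1) (gamma a c0 c1 v0)); auto.
  rewrite logistic_recip_t_inf, logistic_recip_0 by lra.
  apply Rinv_0_lt_compat; lra.
Qed.

Lemma riccati_real_bounds c0 c1 a v0 tmax (v : R -> R) :
  0 < c1 -> 0 <= qdisc a c0 c1 -> v_inf a c0 c1 < v0 ->
  (forall t, in_interval (t_inf a c0 c1 v0) tmax t ->
     derivable_pt_lim v t (a - c0 * v t - c1 * v t ^ 2)) ->
  v 0 = v0 -> in_interval (t_inf a c0 c1 v0) tmax 0 ->
  forall t, in_interval (t_inf a c0 c1 v0) tmax t ->
    let Z := logistic_recip (wr a c0 c1) (gamma a c0 c1 v0) t in
    0 < Z /\ (c1 * v t + alpha a c0 c1) * Z = 1 /\
    v_inf a c0 c1 < v t /\ a - c0 * v t - c1 * v t ^ 2 < 0.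
Proof.
  intros Hc1 Hq Hv0 Hode Hv H0 t Ht Z.
  pose proof (wr_lt_gamma a c0 c1 v0 Hc1 Hv0). pose proof (gamma_pos a c0 c1 v0 Hc1 Hv0).
  assert (HZ : 0 < Z).
  { unfold Z. rewrite <- (logistic_recip_t_inf a c0 c1 v0) by auto.
    apply logistic_recip_lt_iff; auto. apply Ht. }
  assert (HUZ : (c1 * v t + alpha a c0 c1) * Z = 1).
  { apply (logistic_mul_recip (fun t => c1 * v t + alpha a c0 c1) (wr a c0 c1)
             (gamma a c0 c1 v0) (t_inf a c0 c1 v0) tmax); auto; try lra.
    - rewrite Hv. reflexivity.
    - intros y Hy. eapply derivable_pt_lim_eq.
      + apply derivable_pt_lim_plus;
          [apply derivable_pt_lim_scal, Hode, Hy| apply derivable_pt_lim_const].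
      + rewrite Rplus_0_r. apply riccati_logistic, Hq. }
  pose proof (w_mul_logistic_recip_lt_1 (wr a c0 c1) (gamma a c0 c1 v0) t) as HwZ.
  fold Z in HwZ. specialize (HwZ ltac:(lra) ltac:(lra)).
  assert (HU : wr a c0 c1 < c1 * v t + alpha a c0 c1) by nra.
  pose proof (riccati_logistic a c0 c1 (v t) Hq).
  destruct (alpha_beta_relations a c0 c1 Hq) as [Hsum _].
  split; [|split; [|split]]; auto.
  - unfold v_inf. apply (Rmult_lt_reg_l c1); auto.
    replace (c1 * (beta a c0 c1 / c1)) with (beta a c0 c1) by (field; lra). lra.
  - assert (0 < c1 * v t + alpha a c0 c1) by (pose proof (wr_nonneg a c0 c1); lra).
    nra.
Qed.

Lemma v_inf_nonneg a c0 c1 : 0 <= c0 -> 0 < c1 -> 0 <= a -> 0 <= v_inf a c0 c1.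
Proof.
  intros Hc0 Hc1 Ha.
  assert (Hq : 0 <= qdisc a c0 c1) by (unfold qdisc; nra).
  pose proof (wr_sqr a c0 c1 Hq). pose proof (wr_nonneg a c0 c1).
  assert (c0 <= wr a c0 c1) by nra.
  unfold v_inf, beta. apply Rmult_le_pos; [lra| left; apply Rinv_0_lt_compat; lra].
Qed.

Lemma riccati_case_c c0 c1 a v0 (v : R -> R) :
  0 <= c0 -> 0 < c1 -> 0 <= a -> v_inf a c0 c1 < v0 ->
  (forall t, in_interval (t_inf a c0 c1 v0) None t ->
     derivable_pt_lim v t (a - c0 * v t - c1 * v t ^ 2)) ->
  v 0 = v0 ->
  in_interval (t_inf a c0 c1 v0) None 0 /\
  forall t, in_interval (t_inf a c0 c1 v0) None t ->
    0 < v t /\ a - c0 * v t - c1 * v t ^ 2 <= 0.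
Proof.
  intros Hc0 Hc1 Ha Hv0 Hode Hv.
  assert (Hq : 0 <= qdisc a c0 c1) by (unfold qdisc; nra).
  assert (H0 : in_interval (t_inf a c0 c1 v0) None 0) by (split; [apply t_inf_neg|]; auto).
  split; [exact H0|]. intros t Ht.
  destruct (riccati_real_bounds c0 c1 a v0 None v Hc1 Hq Hv0 Hode Hv H0 t Ht)
    as (_ & _ & Hvt & Hrhs).
  pose proof (v_inf_nonneg a c0 c1 Hc0 Hc1 Ha). split; lra.
Qed.

Lemma alpha_pos_beta_neg a c0 c1 : 0 <= c0 -> 0 < c1 -> a < 0 -> 0 <= qdisc a c0 c1 ->
  0 < alpha a c0 c1 /\ beta a c0 c1 < 0.
Proof.
  intros Hc0 Hc1 Ha Hq. pose proof (wr_sqr a c0 c1 Hq). pose proof (wr_nonneg a c0 c1).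
  assert (wr a c0 c1 < c0) by nra. unfold alpha, beta. lra.
Qed.

Lemma logistic_recip_t_circ a c0 c1 v0 : 0 <= c0 -> 0 < c1 -> 0 < v0 -> a < 0 ->
  0 <= qdisc a c0 c1 ->
  logistic_recip (wr a c0 c1) (gamma a c0 c1 v0) (t_circ a c0 c1 v0) = / alpha a c0 c1.
Proof.
  intros Hc0 Hc1 Hv0 Ha Hq.
  destruct (alpha_pos_beta_neg a c0 c1 Hc0 Hc1 Ha Hq) as [Hal Hbe].
  destruct (alpha_beta_relations a c0 c1 Hq) as (Hsum & _ & Hprod).
  pose proof (wr_nonneg a c0 c1) as Hw.
  unfold t_circ, gamma in *.
  revert Hal Hbe Hsum Hprod Hw. generalize (alpha a c0 c1) (beta a c0 c1) (wr a c0 c1).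
  intros al be w Hal Hbe Hsum Hprod Hw.
  assert (Ha' : a = al * be / c1) by (rewrite Hprod; field; lra).
  assert (Hden : a + v0 * be = be * (c1 * v0 + al) / c1) by (rewrite Ha'; field; lra).
  assert (Hx : v0 / (a + v0 * be) = c1 * v0 / (be * (c1 * v0 + al)))
    by (rewrite Hden; field; repeat split; nra).
  assert (Hg : 0 < c1 * v0 + al) by nra.
  assert (Hxneg : c1 * v0 / (be * (c1 * v0 + al)) < 0).
  { assert (Hbg : be * (c1 * v0 + al) < 0) by nra.
    assert (c1 * v0 / (be * (c1 * v0 + al)) * (be * (c1 * v0 + al)) = c1 * v0)
      by (field; lra).
    nra. }
  rewrite Hx, logistic_recip_Lf by nra. rewrite <- Hsum.
  field. repeat split; try lra. apply Rlt_not_eq.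
  replace (be * (c1 * v0 + al) - (al + be) * (c1 * v0)) with (al * (be - c1 * v0)) by ring.
  apply Rmult_pos_neg; [lra|]. pose proof (Rmult_lt_0_compat c1 v0 Hc1 Hv0). lra.
Qed.

Lemma riccati_case_d c0 c1 a v0 (v : R -> R) :
  0 <= c0 -> 0 < c1 -> 0 < v0 -> a < 0 -> 0 <= qdisc a c0 c1 ->
  (forall t, in_interval (t_inf a c0 c1 v0) (Some (t_circ a c0 c1 v0)) t ->
     derivable_pt_lim v t (a - c0 * v t - c1 * v t ^ 2)) ->
  v 0 = v0 ->
  in_interval (t_inf a c0 c1 v0) (Some (t_circ a c0 c1 v0)) 0 /\
  forall t, in_interval (t_inf a c0 c1 v0) (Some (t_circ a c0 c1 v0)) t ->
    0 < v t /\ a - c0 * v t - c1 * v t ^ 2 <= 0.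
Proof.
  intros Hc0 Hc1 Hv0 Ha Hq Hode Hv.
  destruct (alpha_pos_beta_neg a c0 c1 Hc0 Hc1 Ha Hq) as [Hal Hbe].
  assert (Hvinf : v_inf a c0 c1 < v0).
  { unfold v_inf. assert (beta a c0 c1 / c1 < 0) by (apply Rdiv_neg_pos; auto). lra. }
  pose proof (wr_lt_gamma a c0 c1 v0 Hc1 Hvinf) as Hwg.
  pose proof (gamma_pos a c0 c1 v0 Hc1 Hvinf) as Hg.
  assert (Hag : alpha a c0 c1 < gamma a c0 c1 v0)
    by (unfold gamma; pose proof (Rmult_lt_0_compat c1 v0 Hc1 Hv0); lra).
  assert (Hcirc : forall t, t < t_circ a c0 c1 v0 ->
            logistic_recip (wr a c0 c1) (gamma a c0 c1 v0) t < / alpha a c0 c1).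
  { intros t Ht. rewrite <- (logistic_recip_t_circ a c0 c1 v0) by auto.
    apply logistic_recip_lt_iff; auto. }
  assert (H0 : in_interval (t_inf a c0 c1 v0) (Some (t_circ a c0 c1 v0)) 0).
  { split; [apply t_inf_neg; auto|].
    apply (logistic_recip_lt_iff (wr a c0 c1) (gamma a c0 c1 v0)); auto.
    rewrite logistic_recip_0, logistic_recip_t_circ by (auto; lra).
    apply Rinv_lt_contravar; [apply Rmult_lt_0_compat|]; lra. }
  split; [exact H0|]. intros t Ht.
  destruct (riccati_real_bounds c0 c1 a v0 _ v Hc1 Hq Hvinf Hode Hv H0 t Ht)
    as (HZ & HUZ & _ & Hrhs).
  pose proof (Hcirc t (proj2 Ht)) as HZcirc.
  set (Z := logistic_recip (wr a c0 c1) (gamma a c0 c1 v0) t) in *.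
  assert (HaZ : alpha a c0 c1 * Z < 1).
  { apply (Rmult_lt_reg_r (/ alpha a c0 c1)); [apply Rinv_0_lt_compat; lra|].
    rewrite Rmult_1_l, Rmult_comm, <- Rmult_assoc, Rinv_l; lra. }
  assert (Hcv : 0 < c1 * v t) by (apply (Rmult_lt_reg_r Z); lra).
  split; [apply (Rmult_lt_reg_l c1); lra| lra].
Qed.

(** * Complex discriminant *)

Lemma wabs_pos a c0 c1 : qdisc a c0 c1 < 0 -> 0 < wabs a c0 c1.
Proof. intros Hq. apply sqrt_lt_R0. lra. Qed.

Lemma wabs_sqr a c0 c1 : qdisc a c0 c1 < 0 -> wabs a c0 c1 * wabs a c0 c1 = - qdisc a c0 c1.
Proof. intros Hq. apply sqrt_sqrt. lra. Qed.

Lemma atan_pos x : 0 < x -> 0 < atan x.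
Proof. intros Hx. rewrite <- atan_0. apply atan_increasing, Hx. Qed.

(* [y = (2 c1 v + c0) / |w|] solves [y' = - |w| / 2 * (1 + y ^ 2)]. *)
Lemma riccati_atan_conserved c0 c1 a tmin tmax (v : R -> R) t :
  0 < c1 -> qdisc a c0 c1 < 0 ->
  (forall t, in_interval tmin tmax t ->
     derivable_pt_lim v t (a - c0 * v t - c1 * v t ^ 2)) ->
  in_interval tmin tmax 0 -> in_interval tmin tmax t ->
  atan ((2 * c1 * v t + c0) / wabs a c0 c1) + wabs a c0 c1 / 2 * t =
  atan ((2 * c1 * v 0 + c0) / wabs a c0 c1).
Proof.
  intros Hc1 Hq Hode H0 Ht.
  pose proof (wabs_pos a c0 c1 Hq) as HW. pose proof (wabs_sqr a c0 c1 Hq) as HW2.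
  set (W := wabs a c0 c1) in *. unfold qdisc in HW2.
  replace (atan ((2 * c1 * v 0 + c0) / W))
    with (atan ((2 * c1 * v 0 + c0) / W) + W / 2 * 0) by ring.
  apply (in_interval_const_of_deriv_zero
           (fun t => atan ((2 * c1 * v t + c0) / W) + W / 2 * t) tmin tmax); auto.
  intros y Hy. eapply derivable_pt_lim_eq.
  - apply derivable_pt_lim_plus;
      [|apply derivable_pt_lim_scal, derivable_pt_lim_id].
    apply (derivable_pt_lim_comp (fun t => (2 * c1 * v t + c0) / W) atan);
      [|apply derivable_pt_lim_atan].
    apply derivable_pt_lim_div_scal, derivable_pt_lim_plus;
      [apply derivable_pt_lim_scal, Hode, Hy| apply derivable_pt_lim_const].
  - set (u := (2 * c1 * v y + c0) / W).
    assert (Hu : 2 * c1 * v y + c0 = u * W) by (unfold u; field; lra).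
    assert (Hv : v y = (u * W - c0) / (2 * c1)) by (rewrite <- Hu; field; lra).
    assert (Ha : a = - (W * W + c0 ^ 2) / (4 * c1)) by (rewrite HW2; field; lra).
    assert (0 < 1 + u ^ 2) by (pose proof (pow2_ge_0 u); lra).
    rewrite Hv, Ha. field. repeat split; lra.
Qed.

Lemma atan_theta0 c0 c1 a v0 : 0 <= c0 -> 0 < c1 -> 0 < v0 -> qdisc a c0 c1 < 0 ->
  atan ((2 * c1 * v0 + c0) / wabs a c0 c1) =
  atan (c0 / wabs a c0 c1) + theta0 a c0 c1 v0.
Proof.
  intros Hc0 Hc1 Hv0 Hq.
  pose proof (wabs_pos a c0 c1 Hq) as HW. pose proof (wabs_sqr a c0 c1 Hq) as HW2.
  set (W := wabs a c0 c1) in *. unfold qdisc in *.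
  assert (Ha : a < 0) by nra.
  set (u := (2 * c1 * v0 + c0) / W). set (z := c0 / W).
  assert (Hz : 0 <= z) by (apply Rmult_le_pos; [lra| left; apply Rinv_0_lt_compat; lra]).
  assert (Hu : 0 < u)
    by (apply Rdiv_lt_0_compat; [pose proof (Rmult_lt_0_compat c1 v0 Hc1 Hv0)|]; lra).
  assert (Hsub : atan_sub u z = v0 * W / (v0 * c0 + 2 * Rabs a)).
  { rewrite Rabs_left by lra. unfold atan_sub, u, z.
    assert (Ha' : a = - (W * W + c0 ^ 2) / (4 * c1)) by (rewrite HW2; field; lra).
    assert (0 <= v0 * c0) by (apply Rmult_le_pos; lra).
    assert (0 < W * W) by (apply Rmult_lt_0_compat; lra).
    pose proof (pow2_ge_0 c0).
    assert (0 <= c1 * v0 * c0) by (apply Rmult_le_pos; [apply Rmult_le_pos|]; lra).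
    rewrite Ha'. field. repeat split; apply Rgt_not_eq; lra. }
  unfold theta0. fold W. rewrite <- Hsub.
  pose proof (atan_bound u). pose proof (atan_bound z). pose proof (atan_bound (atan_sub u z)).
  assert (0 <= atan z) by (destruct Hz as [Hz|<-]; [left; apply atan_pos| rewrite atan_0]; lra).
  pose proof (atan_pos u Hu).
  apply atan_sub_correct; [nra| lra| lra].
Qed.

Lemma riccati_case_e c0 c1 a v0 (v : R -> R) :
  0 <= c0 -> 0 < c1 -> 0 < v0 -> qdisc a c0 c1 < 0 ->
  (forall t, in_interval (t_vinf a c0 c1 v0) (Some (t_vcirc a c0 c1 v0)) t ->
     derivable_pt_lim v t (a - c0 * v t - c1 * v t ^ 2)) ->
  v 0 = v0 ->
  in_interval (t_vinf a c0 c1 v0) (Some (t_vcirc a c0 c1 v0)) 0 /\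
  forall t, in_interval (t_vinf a c0 c1 v0) (Some (t_vcirc a c0 c1 v0)) t ->
    0 < v t /\ a - c0 * v t - c1 * v t ^ 2 <= 0.
Proof.
  intros Hc0 Hc1 Hv0 Hq Hode Hv.
  pose proof (wabs_pos a c0 c1 Hq) as HW.
  assert (Ha : a < 0) by (unfold qdisc in Hq; nra).
  assert (Hth0 : 0 < theta0 a c0 c1 v0)
    by (unfold theta0; apply atan_pos, Rdiv_lt_0_compat;
        [apply Rmult_lt_0_compat| pose proof (Rmult_le_pos v0 c0); pose proof (Rabs_pos_lt a)];
        lra).
  assert (Hth1 : 0 < theta1 a c0 c1 v0)
    by (unfold theta1; apply atan_pos, Rdiv_lt_0_compat;
        [|pose proof (Rmult_lt_0_compat c1 v0 Hc1 Hv0)]; lra).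
  assert (H0 : in_interval (t_vinf a c0 c1 v0) (Some (t_vcirc a c0 c1 v0)) 0).
  { unfold t_vinf, t_vcirc. split.
    - enough (0 < 2 * theta1 a c0 c1 v0 / wabs a c0 c1) by lra.
      apply Rdiv_lt_0_compat; lra.
    - apply Rdiv_lt_0_compat; lra. }
  split; [exact H0|]. intros t Ht.
  split.
  2:{ assert (Hid : 4 * c1 * (a - c0 * v t - c1 * v t ^ 2) =
                    qdisc a c0 c1 - (2 * c1 * v t + c0) ^ 2) by (unfold qdisc; ring).
      pose proof (pow2_ge_0 (2 * c1 * v t + c0)).
      apply (Rmult_le_reg_l (4 * c1)); lra. }
  destruct (Rlt_le_dec 0 (v t)) as [|Hvt]; [auto| exfalso].
  pose proof (riccati_atan_conserved c0 c1 a _ _ v t Hc1 Hq Hode H0 Ht) as Hcons.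
  rewrite Hv, (atan_theta0 c0 c1 a v0 Hc0 Hc1 Hv0 Hq) in Hcons.
  assert (Hle : atan ((2 * c1 * v t + c0) / wabs a c0 c1) <= atan (c0 / wabs a c0 c1)).
  { assert (Harg : (2 * c1 * v t + c0) / wabs a c0 c1 <= c0 / wabs a c0 c1).
    { unfold Rdiv. apply Rmult_le_compat_r; [left; apply Rinv_0_lt_compat|]; nra. }
    destruct Harg as [Harg| ->]; [left; apply atan_increasing|]; lra. }
  destruct Ht as [_ Ht]. unfold t_vcirc in Ht.
  assert (2 * theta0 a c0 c1 v0 <= wabs a c0 c1 * t) by lra.
  assert (t * wabs a c0 c1 < 2 * theta0 a c0 c1 v0).
  { apply (Rmult_lt_reg_r (/ wabs a c0 c1)); [apply Rinv_0_lt_compat; lra|].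
    rewrite Rmult_assoc, Rinv_r by lra. lra. }
  lra.
Qed.

Theorem mainTheorem11
  (c0 c1 a v0 : R) (Hc0 : 0 <= c0) (Hc1 : 0 < c1) (Hv0 : 0 < v0)
  (tmin : R) (tmax : option R)
  (Hcase :
     (0 <= qdisc a c0 c1 /\ 0 <= a /\ v_inf a c0 c1 < v0 /\
        tmin = t_inf a c0 c1 v0 /\ tmax = None) \/
     (0 <= qdisc a c0 c1 /\ a < 0 /\
        tmin = t_inf a c0 c1 v0 /\ tmax = Some (t_circ a c0 c1 v0)) \/
     (qdisc a c0 c1 < 0 /\
        tmin = t_vinf a c0 c1 v0 /\ tmax = Some (t_vcirc a c0 c1 v0)))
  (v s : R -> R)
  (Hode : forall t, in_interval tmin tmax t ->
            derivable_pt_lim v t (a - c0 * v t - c1 * (v t) ^ 2))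
  (Hv_init : v 0 = v0)
  (Hs : forall t, in_interval tmin tmax t -> derivable_pt_lim s t (v t))
  (Hs_init : s 0 = 0)
  (tstar : R) (Htstar : in_interval tmin tmax tstar) :
  let tk := newton_seq s v tmin (s tstar) in
  (forall k, in_interval tmin tmax (tk k)) /\
  Un_cv tk tstar /\
  (exists C N, forall k, (N <= k)%nat -> tk k <> tstar ->
       Rabs (tk (S k) - tstar) / (Rabs (tk k - tstar)) ^ 2 <= C).
Proof.
  assert (Hsign : in_interval tmin tmax 0 /\ forall t, in_interval tmin tmax t ->
            0 < v t /\ a - c0 * v t - c1 * v t ^ 2 <= 0).
  { destruct Hcase as [(_ & Ha & Hvinf & -> & ->) | [(Hq & Ha & -> & ->) | (Hq & -> & ->)]].
    - apply riccati_case_c; auto.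
    - apply riccati_case_d; auto.
    - apply riccati_case_e; auto. }
  destruct Hsign as [H0 Hsign].
  apply newton_seq_convergence; auto.
  - intros t Ht. apply Hsign, Ht.
  - intros x y Hx Hy. apply (riccati_nonincreasing c0 c1 a tmin tmax); auto.
    intros t Ht. apply Hsign, Ht.
  - intros lo hi Hlo Hhi. apply (riccati_lipschitz c0 c1 a tmin tmax); auto;
      intros t Ht; apply Hsign, Ht.
Qed.
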